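(* Let $\mathbf f$ be the Fibonacci word and $\mathbf g=0\mathbf f$. Then for every nonempty prefix $u$ of $\mathbf f$, the set $\mathbf f|_u$ is an IP$^*$-set (hence a central$^*$ set), and the sets $\mathbf g|_{0u}$ and $\mathbf g|_{1u}$ are both IP-sets (equivalently, central sets).
   Context: The Fibonacci word $\mathbf f=0100101001001\cdots\in\{0,1\}^{\mathbb N}$ is the fixed point of the substitution $0\mapsto01$, $1\mapsto0$. $\mathbb N=\{0,1,2,\dots\}$; for an infinite word $\omega=\omega_0\omega_1\cdots$ and a nonempty finite word $u$, $\omega|_u=\{n:\omega_n\cdots\omega_{n+|u|-1}=u\}$. A set $A\subseteq\mathbb N$ is an IP-set if there is a sequence $x_0<x_1<\cdots$ in $\mathbb N$ with $\sum_{n\in F}x_n\in A$ for all nonempty finite $F\subseteq\mathbb N$, and an IP$^*$-set if it meets every IP-set. $\beta\mathbb N$ is the set of ultrafilters on $\mathbb N$ with addition $A\in p+q$ iff $\{n:A-n\in p\}\in q$ ($A-n=\{m:m+n\in A\}$); a minimal idempotent is a non-principal $p$ with $p+p=p$ in the smallest two-sided ideal of $\beta\mathbb N$; a set is central if it belongs to some minimal idempotent and central$^*$ if it belongs to every minimal idempotent. *)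

From mathcomp Require Import all_boot.
Set Implicit Arguments. Unset Strict Implicit. Unset Printing Implicit Defensive.

(* Infinite words over {0,1}, letters coded as naturals 0 and 1. *)
Definition word := nat -> nat.

Definition fib_sub_letter (a : nat) : seq nat :=
  if a == 0 then [:: 0; 1] else [:: 0].
Definition fib_sub (w : seq nat) : seq nat := flatten (map fib_sub_letter w).

(* The Fibonacci word: its fixed point, f_n = (n-th letter of sigma^(n+1)(0)),
   which is well defined since |sigma^(n+1)(0)| = F_(n+3) > n and the words
   sigma^k(0) are prefixes of one another. *)
Definition fib_word : word := fun n => nth 0 (iter n.+1 fib_sub [:: 0]) n.

Definition g_word : word := fun n => if n is m.+1 then fib_word m else 0.

Definition occ (omega : word) (u : seq nat) : nat -> Prop :=
  fun n => forall i, i < size u -> omega (n + i) = nth 0 u i.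

Definition word_prefix (omega : word) (k : nat) : seq nat := mkseq omega k.

Definition IPset (A : nat -> Prop) : Prop :=
  exists x : nat -> nat, (forall n, x n < x n.+1) /\
    forall F : seq nat, uniq F -> F != [::] -> A (\sum_(i <- F) x i).

Definition IPstar (A : nat -> Prop) : Prop :=
  forall B : nat -> Prop, IPset B -> exists n, A n /\ B n.

Definition ultrafilter (p : (nat -> Prop) -> Prop) : Prop :=
  [/\ p (fun _ => True),
      ~ p (fun _ => False),
      (forall A B : nat -> Prop, (forall n, A n -> B n) -> p A -> p B),
      (forall A B : nat -> Prop, p A -> p B -> p (fun n => A n /\ B n)) &
      (forall A : nat -> Prop, p A \/ p (fun n => ~ A n))].

Definition nonprincipal (p : (nat -> Prop) -> Prop) : Prop :=
  forall m, ~ p (fun n => n = m).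

Definition uf_add (p q : (nat -> Prop) -> Prop) : (nat -> Prop) -> Prop :=
  fun A => q (fun n => p (fun m => A (m + n))).

Definition uf_eq (p q : (nat -> Prop) -> Prop) : Prop :=
  forall A, p A <-> q A.

Definition uf_ideal (I : ((nat -> Prop) -> Prop) -> Prop) : Prop :=
  [/\ (exists p, I p),
      (forall p, I p -> ultrafilter p),
      (forall p p', I p -> uf_eq p p' -> I p') &
      (forall p q, I p -> ultrafilter q -> I (uf_add p q) /\ I (uf_add q p))].

(* p lies in the smallest two-sided ideal K(beta N) (= the intersection of
   all two-sided ideals, since the smallest ideal is contained in all of them) *)
Definition in_smallest_ideal (p : (nat -> Prop) -> Prop) : Prop :=
  ultrafilter p /\ forall I, uf_ideal I -> I p.

Definition minimal_idempotent (p : (nat -> Prop) -> Prop) : Prop :=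
  [/\ ultrafilter p, nonprincipal p, uf_eq (uf_add p p) p & in_smallest_ideal p].

Definition central (A : nat -> Prop) : Prop :=
  exists p, minimal_idempotent p /\ p A.

Definition central_star (A : nat -> Prop) : Prop :=
  forall p, minimal_idempotent p -> p A.

(* The proof combines the algebra of the Stone-Cech compactification beta N
   with the Sturmian description of f.
   1. Ultrafilters and the semigroup (beta N, +): closed sets, compactness
      (via the ultrafilter lemma of the filter library), Zorn's lemma for
      minimal closed sets, the Ellis-Numakura lemma and minimal right ideals.
      A decreasing family of syndetic sets D t with D (t+1) + D (t+1) in D t
      lies in a common minimal idempotent [minimal_idempotent_family].
   2. Galvin-Glazer: members of nonprincipal idempotents are IP-sets; so
      IP* sets are central* and central sets are IP.
   3. With beta = (3 - sqrt 5)/2, f_n = floor((n+2) beta) - floor((n+1) beta):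
      the substitution maps prefixes of this mechanical word to prefixes.
   4. Bohr sets { n | n th is eta-close to Z } are IP* (pigeonhole); the
      one-sided ones { n | n th in [N, N + eta) } are syndetic and, halving
      eta, fit 1., so they are central for irrational th.
   5. If n beta is close enough to an integer, the factor of f (or g) at n
      repeats the prefix; one-sided closeness with th = beta resp. -beta
      fixes the letter 0 resp. 1 of g before it. *)

From Stdlib Require Import Reals Lra Lia ZArith.
From mathcomp Require Import all_boot zify.
From mathcomp Require Import boolp classical_sets filter.
From Pilot Require Import Defs.
Set Implicit Arguments. Unset Strict Implicit. Unset Printing Implicit Defensive.

Local Open Scope classical_set_scope.

Local Notation filt := (set_system nat).

Section UltrafilterFacts.
Variable p : filt.
Hypothesis Up : ultrafilter p.

Lemma ufT : p (fun _ => True).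
Proof. by case: Up. Qed.

Lemma uf_false : ~ p (fun _ => False).
Proof. by case: Up. Qed.

Lemma ufS (A B : set nat) : A `<=` B -> p A -> p B.
Proof. by case: Up => _ _ + _ _; apply. Qed.

Lemma ufI (A B : set nat) : p A -> p B -> p (fun n => A n /\ B n).
Proof. by case: Up => _ _ _ + _; apply. Qed.

Lemma uf_compl (A : set nat) : ~ p A -> p (fun n => ~ A n).
Proof. by case: Up => _ _ _ _ /(_ A) []. Qed.

Lemma uf_not_compl (A : set nat) : p A -> ~ p (fun n => ~ A n).
Proof. by move=> pA npA; apply: uf_false; apply: ufS (ufI pA npA) => n []. Qed.

Lemma uf_nonempty (A : set nat) : p A -> exists n, A n.
Proof.
move=> pA; apply: contrapT => A0; apply: uf_false; apply: ufS pA => n An.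
by apply: A0; exists n.
Qed.

Lemma uf_all (I : eqType) (s : seq I) (P : I -> set nat) :
  (forall i, i \in s -> p (P i)) -> p (fun n => forall i, i \in s -> P i n).
Proof.
elim: s => [|i s IHs] Ps; first by apply: ufS ufT => n _ i.
have := ufI (Ps i (mem_head i s)) (IHs (fun j js => Ps j (mem_behead (s := i :: s) js))).
by apply: ufS => n [Pin Psn] j; rewrite inE => /predU1P [->|/Psn].
Qed.

Lemma uf_cofinite (b : nat) : nonprincipal p -> p (fun n => b < n).
Proof.
move=> np; apply: contrapT => /uf_compl pb.
suff [m pm] : exists m, p (fun n => n = m) by exact: np pm.
apply: contrapT => /forallNP nb.
have := uf_all (s := iota 0 b.+1) (fun m _ => uf_compl (nb m)).
move/(ufI pb)/uf_nonempty => [n [/negP nb' /(_ n)]]; rewrite mem_iota /=.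
by rewrite ltnS leqNgt => /(_ nb').
Qed.

End UltrafilterFacts.

Lemma uf_ext (p q : filt) :
  ultrafilter p -> ultrafilter q -> p `<=` q -> p = q.
Proof.
move=> Up Uq pq; apply/funext => A; apply/propext; split; first exact: pq.
by move=> qA; apply: contrapT => /(uf_compl Up)/pq; apply: uf_not_compl.
Qed.

Definition principal (n : nat) : filt := fun A => A n.

Lemma principal_ultra (n : nat) : ultrafilter (principal n).
Proof. by split=> [||A B AB /AB|A B|A] //; exact: EM. Qed.

Lemma uf_add_ultra (p q : filt) :
  ultrafilter p -> ultrafilter q -> ultrafilter (uf_add p q).
Proof.
move=> Up Uq; split=> [||A B AB|A B|A]; rewrite /uf_add.
- by apply: (ufS Uq) (ufT Uq) => n _; apply: ufT.
- by move=> qF; apply: (uf_false Uq); apply: (ufS Uq) qF => n /(uf_false Up).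
- by apply: (ufS Uq) => n; apply: (ufS Up) => m /AB.
- move=> qA /(ufI Uq qA); apply: (ufS Uq) => n [pA pB].
  exact: (ufI Up pA pB).
- have [qA|/(uf_compl Uq) qnA] := EM
    (q (fun n => p (fun m => A (m + n)))); first by left.
  by right; apply: (ufS Uq) qnA => n /(uf_compl Up).
Qed.

Lemma uf_add_assoc (p q r : filt) :
  uf_add p (uf_add q r) = uf_add (uf_add p q) r.
Proof.
apply/funext => A; rewrite /uf_add; congr r; apply/funext => n.
by congr q; apply/funext => m; congr p; apply/funext => k; rewrite addnA.
Qed.

(* The Stone topology on the ultrafilters: C is closed when it contains every
   ultrafilter that contains all the sets common to the members of C. *)
Definition closed_uf (C : set filt) : Prop :=
  C `<=` ultrafilter /\
  forall r, ultrafilter r -> (forall A, (forall q, C q -> q A) -> r A) -> C r.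

Lemma closure_meets (C : set filt) (r : filt) (A : set nat) :
  C `<=` ultrafilter -> ultrafilter r ->
  (forall B, (forall q, C q -> q B) -> r B) -> r A -> exists2 q, C q & q A.
Proof.
move=> CU Ur rC rA; apply: contrapT => /forall2NP nCA.
apply: (uf_not_compl Ur rA); apply: rC => q Cq.
by case: (nCA q) => [/(_ Cq)[]|/(uf_compl (CU q Cq))].
Qed.

Lemma closed_basic (A : set nat) : closed_uf [set p | ultrafilter p /\ p A].
Proof. by split=> [p []//|r Ur rC]; split=> //; apply: rC => q []. Qed.

Lemma closed_meet (X : set filt) (G : set (set filt)) :
  closed_uf X -> (forall Y, G Y -> closed_uf Y) ->
  closed_uf (X `&` \bigcap_(Y in G) Y).
Proof.
move=> [XU Xr] Gc; split=> [p [/XU]//|r Ur rC]; split.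
  by apply: Xr => // A XA; apply: rC => q [/XA].
move=> Y GY; have [_ Yr] := Gc Y GY; apply: Yr => // A YA.
by apply: rC => q [_ /(_ Y GY)/YA].
Qed.

Lemma closed_setI (X Y : set filt) :
  closed_uf X -> closed_uf Y -> closed_uf (X `&` Y).
Proof.
move=> [XU Xr] [_ Yr]; split=> [p [/XU]//|r Ur rC]; split.
  by apply: Xr => // A XA; apply: rC => q [/XA].
by apply: Yr => // A YA; apply: rC => q [_ /YA].
Qed.

(* Maximal proper filters of the filter library are ultrafilters in the
   sense of [Defs]; this is how the ultrafilter lemma is imported. *)
Lemma UltraFilter_ultrafilter (U : filt) : UltraFilter U -> ultrafilter U.
Proof.
move=> UU; split=> [|||A B|A]; first exact: filterT.
- exact: filter_not_empty.
- exact: filterS.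
- exact: filterI.
- exact: in_ultra_setVsetC.
Qed.

(* The sets belonging to all members
   of X or of some member of G form a proper filter, any ultrafilter
   refining it lies in X and in every member of G by closedness. *)
Lemma directed_meet (X : set filt) (G : set (set filt)) :
  closed_uf X -> X !=set0 ->
  (forall Y, G Y -> [/\ closed_uf Y, Y !=set0 & Y `<=` X]) ->
  (forall Y Z, G Y -> G Z -> exists2 W, G W & W `<=` Y `&` Z) ->
  exists p, X p /\ forall Y, G Y -> Y p.
Proof.
move=> [XU Xr] [x Xx] GP Gdir.
pose F : filt := fun B =>
  (forall q, X q -> q B) \/ exists2 Y, G Y & forall q, Y q -> q B.
have YU Y : G Y -> Y `<=` ultrafilter by move=> /GP [_ _ YX] q /YX /XU.
have FF : ProperFilter F.
  apply: Build_ProperFilter_ex.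
    move=> B [XB|[Y GY YB]]; first exact: (uf_nonempty (XU x Xx) (XB x Xx)).
    have [_ [y Yy] _] := GP Y GY.
    exact: (uf_nonempty (YU Y GY y Yy) (YB y Yy)).
  split=> [|B C|B C BC].
  - by left=> q /XU Uq; apply: ufT.
  - move=> [XB|[Y GY YB]] [XC|[Z GZ ZC]].
    + by left=> q Xq; apply: (ufI (XU q Xq)); [apply: XB|apply: XC].
    + right; exists Z => // q Zq; have [_ _ /(_ q Zq) Xq] := GP Z GZ.
      by apply: (ufI (XU q Xq)); [apply: XB|apply: ZC].
    + right; exists Y => // q Yq; have [_ _ /(_ q Yq) Xq] := GP Y GY.
      by apply: (ufI (XU q Xq)); [apply: YB|apply: XC].
    + have [W GW WYZ] := Gdir Y Z GY GZ; right; exists W => // q Wq.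
      have [Yq Zq] := WYZ q Wq.
      by apply: (ufI (YU W GW q Wq)); [apply: YB|apply: ZC].
  - move=> [XB|[Y GY YB]]; first by left=> q Xq; apply: (ufS (XU q Xq)) (XB q Xq).
    by right; exists Y => // q Yq; apply: (ufS (YU Y GY q Yq)) (YB q Yq).
have [U [/UltraFilter_ultrafilter UU FU]] := ultraFilterLemma FF.
exists U; split; first by apply: Xr => // B XB; apply: FU; left.
move=> Y GY; have [[_ Yr] _ _] := GP Y GY.
by apply: Yr => // B YB; apply: FU; right; exists Y.
Qed.

(* Left translation q |-> x + q is continuous, so images of closed sets are
   closed: an ultrafilter r in the closure of x + C is x + y, where y is a
   common point of the directed family { y in C | E in x + y }, E in r. *)
Lemma closed_translate (C : set filt) (x : filt) :
  closed_uf C -> ultrafilter x -> closed_uf [set uf_add x y | y in C].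
Proof.
move=> [CU Cr] Ux; split=> [_ [y /CU Uy <-]|r Ur rC].
  exact: uf_add_ultra.
have xCU : [set uf_add x y | y in C] `<=` ultrafilter.
  by move=> _ [y /CU Uy <-]; apply: uf_add_ultra.
pose K E := C `&` [set y | ultrafilter y /\ uf_add x y E].
have KP E : r E -> [/\ closed_uf (K E), K E !=set0 & K E `<=` C].
  move=> rE; split=> [||y []//].
  - by apply: closed_setI; [split|apply: closed_basic].
  - have [_ [y Cy <-] xyE] := closure_meets xCU Ur rC rE.
    by exists y; split=> //; split=> //; apply: CU.
have KG Z : [set K E | E in r] Z -> [/\ closed_uf Z, Z !=set0 & Z `<=` C].
  by move=> [E rE <-]; apply: KP.
have Kdir Z Z' : [set K E | E in r] Z -> [set K E | E in r] Z' ->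
    exists2 W, [set K E | E in r] W & W `<=` Z `&` Z'.
  move=> [E rE <-] [E' rE' <-]; exists (K (fun n => E n /\ E' n)).
    by exists (fun n => E n /\ E' n) => //; apply: ufI.
  move=> q [Cq [Uq qEE']]; have Uxq := uf_add_ultra Ux Uq.
  by split; split=> //; split=> //; apply: (ufS Uxq) qEE' => n [].
have [_ [y0 [Cy0 _]] _] := KP _ (ufT Ur).
have [y [Cy Ky]] := directed_meet (conj CU Cr) (ex_intro _ y0 Cy0) KG Kdir.
exists y => //; apply/esym/uf_ext => // [|E rE].
  exact: uf_add_ultra (CU y Cy).
by have [_ []] := Ky (K E) (ex_intro2 _ _ E rE erefl).
Qed.

Lemma closed_fixers (Y : set filt) (x : filt) :
  closed_uf Y -> ultrafilter x -> closed_uf [set y | Y y /\ uf_add x y = x].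
Proof.
move=> [YU Yr] Ux; split=> [y [/YU]//|r Ur rC]; split.
  by apply: Yr => // A YA; apply: rC => q [/YA].
apply/esym/uf_ext => // [|E xE]; first exact: uf_add_ultra.
by apply: rC => q [_ xq]; rewrite -xq in xE.
Qed.

(* Chains of nonempty closed
   sets have nonempty intersection by compactness. *)
Lemma minimal_closed (Q : set (set filt)) (X : set filt) :
  (forall Y G, Q Y -> (forall Z, G Z -> Q Z) -> Q (Y `&` \bigcap_(Z in G) Z)) ->
  closed_uf X -> X !=set0 -> Q X ->
  exists Y, [/\ closed_uf Y, Y !=set0, Q Y, Y `<=` X &
    forall Z, closed_uf Z -> Z !=set0 -> Q Z -> Z `<=` Y -> Y `<=` Z].
Proof.
move=> Qmeet cX neX QX.
pose good Y := [/\ closed_uf Y, Y !=set0, Q Y & Y `<=` X].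
pose T := {Y : set filt | good Y}.
pose R (a b : T) := `[< sval b `<=` sval a >].
have [t tmin] : exists t, premaximal R t.
  apply: (ZL_preorder (exist _ X (And4 cX neX QX (@subset_refl _ X)))).
- by move=> a; apply/asboolP.
- by move=> a b c /asboolP ba /asboolP cb; apply/asboolP => q /cb /ba.
- move=> A Atot; pose G := [set sval a | a in A].
  have GX Y : G Y -> [/\ closed_uf Y, Y !=set0 & Y `<=` X].
    by move=> [a _ <-]; have [] := svalP a.
  have Gdir Y Z : G Y -> G Z -> exists2 W, G W & W `<=` Y `&` Z.
    move=> [a Aa <-] [b Ab <-].
    have [/asboolP ba|/asboolP ab] := Atot a b Aa Ab.
      by exists (sval b); [exists b|move=> q bq; split=> //; apply: ba].
    by exists (sval a); [exists a|move=> q aq; split=> //; apply: ab].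
  have goodM : good (X `&` \bigcap_(Y in G) Y).
    split; [|apply: directed_meet| |by move=> q []] => //.
    - by apply: closed_meet => // Y /GX [].
    - by apply: Qmeet => // Y [a _ <-]; have [] := svalP a.
  exists (exist _ _ goodM) => a Aa; apply/asboolP => q [_ /(_ (sval a))].
  by apply; exists a.
case: t tmin => Y [cY neY QY YX] /= tmin; exists Y; split=> // Z cZ neZ QZ ZY.
have goodZ : good Z by split=> // q /ZY /YX.
by have /asboolP := tmin (exist _ Z goodZ) (asboolT ZY).
Qed.

Definition subsemigroup (Y : set filt) : Prop :=
  forall p q, Y p -> Y q -> Y (uf_add p q).

Definition right_ideal (Y : set filt) : Prop :=
  forall p q, Y p -> ultrafilter q -> Y (uf_add p q).

(* Take a minimal nonempty closed subsemigroup A and x in A; then x + A is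
   such a subsemigroup inside A, so x = x + y for some y in A, and then
   { y in A | x + y = x } is one too, so it contains x. *)
Lemma ellis_numakura (X : set filt) :
  closed_uf X -> X !=set0 -> subsemigroup X -> exists2 e, X e & uf_add e e = e.
Proof.
move=> cX neX sX.
have Qmeet Y G : subsemigroup Y -> (forall Z, G Z -> subsemigroup Z) ->
    subsemigroup (Y `&` \bigcap_(Z in G) Z).
  move=> sY sG p q [Yp Gp] [Yq Gq]; split; first exact: sY.
  by move=> Z GZ; apply: (sG Z GZ); [apply: Gp|apply: Gq].
have [A [cA [x Ax] sA AX Amin]] := minimal_closed Qmeet cX neX sX.
have Ux : ultrafilter x by case: cA => + _; apply.
have [y Ay xyx] : [set uf_add x y | y in A] x.
  apply: (Amin _ _ _ _ _ x Ax); first exact: closed_translate.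
  - by exists (uf_add x x); exists x.
  - move=> _ _ [y Ay <-] [z Az <-]; exists (uf_add y (uf_add x z)).
      by apply: (sA) => //; apply: (sA).
    by rewrite !uf_add_assoc.
  - by move=> _ [y Ay <-]; apply: (sA).
have [_] : [set y | A y /\ uf_add x y = x] x.
  apply: (Amin _ _ _ _ _ x Ax); first exact: closed_fixers.
  - by exists y.
  - move=> p q [Ap xp] [Aq xq]; split; first exact: (sA).
    by rewrite uf_add_assoc xp xq.
  - by move=> p [].
by exists x; first exact: AX.
Qed.

Definition min_right_ideal (L : set filt) : Prop :=
  [/\ closed_uf L, L !=set0, right_ideal L &
    forall Z, closed_uf Z -> Z !=set0 -> right_ideal Z -> Z `<=` L -> L `<=` Z].

Lemma min_right_ideal_exists : exists L, min_right_ideal L.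
Proof.
have Qmeet Y G : right_ideal Y -> (forall Z, G Z -> right_ideal Z) ->
    right_ideal (Y `&` \bigcap_(Z in G) Z).
  move=> rY rG p q [Yp Gp] Uq; split; first exact: rY.
  by move=> Z GZ; apply: (rG Z GZ) => //; apply: Gp.
have cU : closed_uf ultrafilter by split.
have neU : ultrafilter !=set0 by exists (principal 0); apply: principal_ultra.
have rU : right_ideal ultrafilter by move=> p q; apply: uf_add_ultra.
have [L [cL neL rL _ Lmin]] := minimal_closed Qmeet cU neU rU.
by exists L; split.
Qed.

(* Every element e of a minimal closed right ideal L lies in every two-sided
   ideal I: for q in I, w = e + q is in L and in I, and the closed right
   ideal w + beta N inside L must be all of L, so e = w + y lies in I. *)
Lemma min_right_ideal_smallest (L : set filt) (e : filt) :
  min_right_ideal L -> L e -> in_smallest_ideal e.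
Proof.
move=> [[LU _] _ rL Lmin] Le; split=> [|I [[q Iq] IU _ Iadd]]; first exact: LU.
have Ue := LU e Le; have Uq := IU q Iq.
pose w := uf_add e q; have Uw : ultrafilter w by apply: uf_add_ultra.
have [y Uy <-] : [set uf_add w y | y in ultrafilter] e.
  apply: (Lmin _ _ _ _ _ e Le); first by apply: closed_translate => //; split.
  - by exists (uf_add w w); exists w.
  - move=> _ r [y Uy <-] Ur; exists (uf_add y r); first exact: uf_add_ultra.
    by rewrite uf_add_assoc.
  - by move=> _ [y Uy <-]; apply: (rL) => //; apply: (rL).
by have [+ _] := Iadd w y (proj2 (Iadd q e Iq Ue)) Uy.
Qed.

Lemma uf_finite_cover (q : filt) (b : nat) (P : nat -> set nat) :
  ultrafilter q -> (forall n, exists2 j, j <= b & P j n) -> exists j, q (P j).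
Proof.
move=> Uq cover; apply: contrapT => /forallNP nq.
have := uf_all Uq (s := iota 0 b.+1) (fun j _ => uf_compl Uq (nq j)).
move/(uf_nonempty Uq) => [n Hn].
by have [j jb] := cover n; apply: Hn; rewrite mem_iota ltnS.
Qed.

Definition syndetic (S : set nat) : Prop :=
  exists b, forall n, exists2 j, j <= b & S (n + j).

(* A nonempty right ideal meets the closure of every syndetic set: if q is
   in L, then one of the finitely many shifts q + j contains S. *)
Lemma right_ideal_syndetic (L : set filt) (S : set nat) :
  L `<=` ultrafilter -> right_ideal L -> L !=set0 -> syndetic S ->
  exists p, L p /\ p S.
Proof.
move=> LU rL [q Lq] [b Sb].
have [j qSj] := uf_finite_cover (LU q Lq) (P := fun j n => S (n + j)) Sb.
exists (uf_add q (principal j)); split=> //.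
by apply: (rL) => //; apply: principal_ultra.
Qed.

(* An idempotent ultrafilter containing a set that avoids 0 is nonprincipal,
   since the only principal idempotent is the one at 0. *)
Lemma idempotent_nonprincipal (e : filt) (A : set nat) :
  ultrafilter e -> uf_add e e = e -> e A -> ~ A 0 -> nonprincipal e.
Proof.
move=> Ue ee eA nA0 m em.
have e_m : e = principal m.
  apply: uf_ext (principal_ultra m) _ => // B eB.
  by have [n [Bn <-]] := uf_nonempty Ue (ufI Ue eB em).
have : uf_add e e (fun n => n = m) by rewrite ee.
rewrite e_m /uf_add /principal => mm.
by move: eA; rewrite e_m /principal (_ : m = 0) //; lia.
Qed.

(* A closed right ideal L meets the closures of all the members of a
   decreasing family of syndetic sets: each L /\ closure (D t) is nonempty,
   and these closed sets form a chain, so compactness applies. *)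
Lemma right_ideal_meets_chain (L : set filt) (D : nat -> set nat) :
  closed_uf L -> L !=set0 -> right_ideal L ->
  (forall t, D t.+1 `<=` D t) -> (forall t, syndetic (D t)) ->
  exists p, L p /\ forall t, p (D t).
Proof.
move=> cL neL rL Ddec Dsyn; have LU : L `<=` ultrafilter by case: cL.
have Dmono t t' : t <= t' -> D t' `<=` D t.
  elim: t' => [|t' IH]; first by rewrite leqn0 => /eqP ->.
  by rewrite leq_eqVlt ltnS => /predU1P [<-//|/IH Dt] n /Ddec /Dt.
pose K t := L `&` [set p | ultrafilter p /\ p (D t)].
have [p [Lp Kp]] : exists p, L p /\ forall Y, range K Y -> Y p.
  apply: directed_meet => // [_ [t _ <-]|_ _ [t _ <-] [t' _ <-]].
    split; [exact: closed_setI (closed_basic _)| |by move=> q []].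
    have [p [Lp pD]] := right_ideal_syndetic LU rL neL (Dsyn t).
    by exists p; split=> //; split=> //; apply: LU.
  exists (K (maxn t t')); first by exists (maxn t t').
  move=> q [Lq [Uq qD]].
  by split; split=> //; split=> //; apply: (ufS Uq) qD; apply: Dmono;
    [apply: leq_maxl|apply: leq_maxr].
by exists p; split=> // t; have [_ []] := Kp _ (ex_intro2 _ _ t I erefl).
Qed.

(* The combinatorial core of centrality: a decreasing family of syndetic sets
   D t with D (t+1) + D (t+1) contained in D t, and 0 outside D 0, lies in a
   common minimal idempotent.  It is obtained by Ellis-Numakura in the closed
   subsemigroup of a minimal right ideal L made of the ultrafilters that
   contain every D t. *)
Theorem minimal_idempotent_family (D : nat -> set nat) :
  (forall t, D t.+1 `<=` D t) ->
  (forall t m n, D t.+1 m -> D t.+1 n -> D t (m + n)) ->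
  (forall t, syndetic (D t)) -> ~ D 0 0 ->
  exists p, minimal_idempotent p /\ forall t, p (D t).
Proof.
move=> Ddec Dadd Dsyn nD00.
have [L Lmin] := min_right_ideal_exists.
have [cL neL rL _] := Lmin; have LU : L `<=` ultrafilter by case: cL.
pose X0 := [set p | L p /\ forall t, p (D t)].
have cX0 : closed_uf X0.
  case: cL => _ Lr; split=> [p [/LU]//|r Ur rX0]; split.
    by apply: Lr => // A LA; apply: rX0 => q [/LA].
  by move=> t; apply: rX0 => q [_]; apply.
have neX0 : X0 !=set0 by apply: right_ideal_meets_chain.
have sX0 : subsemigroup X0.
  move=> q r [Lq Dq] [Lr Dr]; split; first by apply: (rL) => //; apply: LU.
  move=> t; apply: (ufS (LU r Lr)) (Dr t.+1) => n Dn.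
  by apply: (ufS (LU q Lq)) (Dq t.+1) => m Dm; apply: Dadd.
have [e [Le De] ee] := ellis_numakura cX0 neX0 sX0.
exists e; split=> //; split; first exact: LU.
- exact: idempotent_nonprincipal (LU e Le) ee (De 0) nD00.
- by move=> A; rewrite ee.
- exact: min_right_ideal_smallest Lmin Le.
Qed.

(* The list of all finite sums of a sequence built greedily: the next term is
   chosen by [next] from the list of finite sums of the previous terms. *)
Fixpoint fin_sums (next : seq nat -> nat) (n : nat) : seq nat :=
  if n is m.+1 then
    let s := fin_sums next m in s ++ next s :: [seq z + next s | z <- s]
  else [::].

Definition greedy_seq (next : seq nat -> nat) (i : nat) : nat :=
  next (fin_sums next i).

Lemma fin_sums_mem (next : seq nat -> nat) (n : nat) (F : seq nat) :
  uniq F -> F != [::] -> all (fun i => i < n) F ->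
  \sum_(i <- F) greedy_seq next i \in fin_sums next n.
Proof.
elim: n F => [|n IHn] F uF nF; first by case: F uF nF => // i F _ _ /andP [].
rewrite /= mem_cat in_cons; have [nF'|nnF] := boolP (n \in F); last first.
  move=> Fn; rewrite IHn //; apply/allP => i iF.
  have := allP Fn i iF; rewrite ltnS leq_eqVlt => /predU1P [eqin|//].
  by move: nnF; rewrite -eqin iF.
move=> Fn; rewrite (big_rem n nF') /= addnC.
have Fn' : all (fun i => i < n) (rem n F).
  apply/allP => i iF; have := allP Fn i (mem_rem iF).
  by rewrite ltnS leq_eqVlt => /predU1P [eqin|//]; move: iF; rewrite eqin mem_rem_uniqF.
case E : (rem n F) => [|j F']; first by rewrite big_nil add0n eqxx orbT.
rewrite -E; apply/orP; right; apply/orP; right.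
apply: (map_f (fun z => z + next (fin_sums next n))).
by apply: IHn => //; [apply: rem_uniq | rewrite E].
Qed.

(* With A* = { x in A | A - x in p }, which is in p, and
   A* - x in p for x in A*, one picks inductively x_n in A*, larger than all
   previous finite sums s and with s + x_n in A* for each of them. *)
Section GalvinGlazer.
Variables (p : filt) (A : set nat).
Hypotheses (Up : ultrafilter p) (np : nonprincipal p).
Hypotheses (ip : uf_eq (uf_add p p) p) (pA : p A).

Let Astar : set nat := fun x => A x /\ p (fun m => A (m + x)).

Let pAstar : p Astar.
Proof. exact: (ufI Up pA ((ip A).2 pA)). Qed.

Let Astar_shift (x : nat) : Astar x -> p (fun y => Astar (y + x)).
Proof.
move=> [Ax px]; have := ufI Up px ((ip (fun m => A (m + x))).2 px).
apply: (ufS Up) => y [Ayx pyx]; split=> //.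
by apply: (ufS Up) pyx => m; rewrite addnA.
Qed.

Let admissible (s : seq nat) : set nat :=
  fun y => Astar y /\ forall z, z \in s -> z < y /\ Astar (z + y).

Let next (s : seq nat) : nat := xget 0 (admissible s).

Let next_admissible (s : seq nat) :
  (forall z, z \in s -> Astar z) -> admissible s (next s).
Proof.
move=> sA; apply: xgetPex; apply: (uf_nonempty Up); apply: (ufI Up pAstar).
apply: (uf_all Up) => z zs; apply: (ufI Up (uf_cofinite Up z np)).
by apply: (ufS Up) (Astar_shift (sA z zs)) => y; rewrite addnC.
Qed.

Let fin_sums_Astar (n : nat) (z : nat) : z \in fin_sums next n -> Astar z.
Proof.
elim: n z => [//|n IHn] z /=; have [ny nsums] := next_admissible IHn.
rewrite mem_cat in_cons => /or3P [/IHn //|/eqP -> //|/mapP [w ws ->]].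
by have [] := nsums w ws.
Qed.

Lemma idempotent_IPset : IPset A.
Proof.
exists (greedy_seq next); split=> [n|F uF nF].
  have [_ nsums] := next_admissible (@fin_sums_Astar n.+1).
  have xn : greedy_seq next n \in fin_sums next n.+1.
    by rewrite /= mem_cat in_cons eqxx orbT.
  by have [] := nsums _ xn.
pose n := (\max_(i <- F) i).+1.
have Fn : all (fun i => i < n) F by apply/allP => i iF; rewrite ltnS leq_bigmax_seq.
by have [] := fin_sums_Astar (fin_sums_mem next uF nF Fn).
Qed.

End GalvinGlazer.

Lemma IPstar_central_star (A : set nat) : IPstar A -> central_star A.
Proof.
move=> IPA p [Up np ip _]; apply: contrapT => /(uf_compl Up) pnA.
by have [n []] := IPA _ (idempotent_IPset Up np ip pnA).
Qed.

Lemma central_IPset (A : set nat) : central A -> IPset A.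
Proof. by move=> [p [[Up np ip _] pA]]; apply: idempotent_IPset pA. Qed.

(* sqrt 5 is irrational: in a^2 = 5 b^2 the exponent of 5 is odd on the
   right and even on the left. *)
Lemma no_sqrt5 (a b : nat) : 0 < b -> a * a = 5 * (b * b) -> False.
Proof.
move=> b0 ab; have a0 : 0 < a by nia.
have := congr1 (logn 5) ab.
rewrite lognM // lognM // ?muln_gt0 ?b0 // lognM //.
rewrite (logn_prime 5 (isT : prime 5)) eqxx !addnn.
by move/(congr1 odd); rewrite odd_double /= odd_double.
Qed.

Section Beta.
Local Open Scope R_scope.

(* The slope of the Fibonacci word: beta = 1 / phi^2 = (3 - sqrt 5) / 2. *)
Definition beta : R := (3 - sqrt 5) / 2.

Lemma sqrt5_sq : sqrt 5 * sqrt 5 = 5.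
Proof. by rewrite sqrt_sqrt; lra. Qed.

Lemma beta_bounds : 0 < beta < 1/2.
Proof.
have s5 := sqrt5_sq; have s5pos := sqrt_pos 5.
have : 2 < sqrt 5 < 3 by split; nra.
rewrite /beta; lra.
Qed.

Lemma beta_sq : beta * beta = 3 * beta - 1.
Proof. by rewrite /beta; have := sqrt5_sq; nra. Qed.

Lemma beta_irrational (m N : Z) : m <> 0%Z -> IZR m * beta <> IZR N.
Proof.
move=> m0 mN; apply: (@no_sqrt5 (Z.abs_nat (3 * m - 2 * N)) (Z.abs_nat m)).
  by apply/ltP; lia.
have s5 : IZR (3 * m - 2 * N) = IZR m * sqrt 5.
  rewrite minus_IZR !mult_IZR -mN /beta; field.
have /eq_IZR sq : IZR ((3 * m - 2 * N) * (3 * m - 2 * N)) = IZR (5 * (m * m)).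
  by rewrite mult_IZR s5 !mult_IZR; have := sqrt5_sq; nra.
by apply/eqP/Nat.eqb_spec; lia.
Qed.

End Beta.

Section MechanicalWord.
Local Open Scope R_scope.

Lemma Int_part_bounds (x : R) : IZR (Int_part x) <= x < IZR (Int_part x) + 1.
Proof. by have [] := base_Int_part x; lra. Qed.

Lemma Int_part_eq (x : R) (z : Z) : IZR z <= x < IZR z + 1 -> Int_part x = z.
Proof. by move=> xz; apply/esym/Int_part_spec; lra. Qed.

Lemma INR_addn (m n : nat) : INR (m + n)%N = INR m + INR n.
Proof. by rewrite -plusE plus_INR. Qed.

Definition lower (n : nat) : Z := Int_part (INR n * beta).

Definition sturm (n : nat) : nat := Z.to_nat (lower n.+1 - lower n).

(* floor(n beta) = 0 for n <= 2, as beta < 1/2. *)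
Lemma lower_small (n : nat) : (n <= 2)%N -> lower n = 0%Z.
Proof.
move=> n2; apply: Int_part_eq; have [b0 b1] := beta_bounds.
have [n0 n1] : 0 <= INR n <= 2 by split; [apply: pos_INR|apply: (le_INR n 2); lia].
have : 0 <= INR n * beta by apply: Rmult_le_pos; lra.
have : INR n * beta <= 2 * beta by apply: Rmult_le_compat_r; lra.
lra.
Qed.

(* j beta is never an integer for j > 0. *)
Lemma lower_lt (j : nat) : (0 < j)%N -> IZR (lower j) < INR j * beta.
Proof.
move=> j0; have [+ _] := Int_part_bounds (INR j * beta).
case=> // jZ; exfalso; apply: (@beta_irrational (Z.of_nat j) (lower j)); first lia.
by rewrite -INR_IZR_INZ.
Qed.

(* Since beta < 1, floor(n beta) increases by 0 or 1 at each step, so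
   [sturm] is a word over {0, 1}. *)
Lemma lower_step (n : nat) : lower n.+1 = lower n \/ lower n.+1 = (lower n + 1)%Z.
Proof.
have [lo hi] := Int_part_bounds (INR n * beta); have := beta_bounds.
rewrite /lower S_INR Rmult_plus_distr_r Rmult_1_l => bb.
have [h|h] := Rlt_le_dec (INR n * beta + beta) (IZR (Int_part (INR n * beta)) + 1).
  by left; apply: Int_part_eq; lra.
by right; apply: Int_part_eq; rewrite plus_IZR; lra.
Qed.

Lemma sturmE (n : nat) : Z.of_nat (sturm n) = (lower n.+1 - lower n)%Z.
Proof. by rewrite /sturm; case: (lower_step n) => ->; lia. Qed.

Lemma sturm_le1 (n : nat) : (sturm n <= 1)%N.
Proof. by have := sturmE n; case: (lower_step n); lia. Qed.

(* floor((n+1) beta) < n for n > 0, as beta < 1/2. *)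
Lemma lower_lt_self (n : nat) : (0 < n)%N -> (lower n.+1 < Z.of_nat n)%Z.
Proof.
move=> n0; apply: lt_IZR; rewrite -INR_IZR_INZ.
have [lo _] := Int_part_bounds (INR n.+1 * beta); have [b0 b1] := beta_bounds.
have n1 : 1 <= INR n by apply: (le_INR 1); lia.
by rewrite S_INR in lo; rewrite /lower S_INR; nra.
Qed.

End MechanicalWord.

(* The candidate Fibonacci word: f_i = floor((i+2) beta) - floor((i+1) beta). *)
Definition fw (i : nat) : nat := sturm i.+1.

Lemma fib_sub_rcons (s : seq nat) (x : nat) :
  fib_sub (rcons s x) = fib_sub s ++ fib_sub_letter x.
Proof. by rewrite /fib_sub -cats1 map_cat flatten_cat /= cats0. Qed.

(* The length of the image of the prefix of length i; it equals
   2 i - (number of 1s in the prefix). *)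
Definition sub_len (i : nat) : nat := size (fib_sub (mkseq fw i)).

Lemma sub_lenE (i : nat) : Z.of_nat (sub_len i) = (2 * Z.of_nat i - lower i.+1)%Z.
Proof.
elim: i => [|i IHi]; first by rewrite /sub_len /= lower_small.
rewrite /sub_len mkseqS fib_sub_rcons size_cat -/(sub_len i).
have := sturmE i.+1; have := sturm_le1 i.+1; rewrite /fw.
by case: (sturm i.+1) => [|[|//]] _ e; rewrite [size _]/=; lia.
Qed.

Section SubstitutionFold.
Local Open Scope R_scope.

(* Arithmetic heart of the self-similarity: with a = floor((i+1) beta) and
   t = (i+1) beta - a, one has (2i - a + 1) beta = (i - a) + (1-beta)(1-t),
   using beta^2 = 3 beta - 1.  This locates the letters of f at the
   positions just after the image sigma(f_0 ... f_(i-1)). *)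
Lemma lower_after_image (i : nat) :
  let L := sub_len i in let a := lower i.+1 in
  [/\ lower L.+1 = (Z.of_nat i - a)%Z, lower L.+2 = (Z.of_nat i - a)%Z &
      lower i.+2 = a -> lower L.+3 = (Z.of_nat i - a + 1)%Z].
Proof.
move=> L a; have [b0 b1] := beta_bounds; have bsq := beta_sq.
have INR_L k : INR (L + k) = IZR (2 * Z.of_nat i - a) + INR k.
  by rewrite INR_addn INR_IZR_INZ sub_lenE.
have Ii1 : INR i.+1 = IZR (Z.of_nat i) + 1 by rewrite S_INR INR_IZR_INZ.
set t := INR i.+1 * beta - IZR a.
have [t0 t1] : 0 < t < 1.
  have := lower_lt (ltn0Sn i); have [] := Int_part_bounds (INR i.+1 * beta).
  by rewrite /t /a /lower; lra.
set c := (1 - beta) * (1 - t).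
have fold k : INR (L + k) * beta = IZR (Z.of_nat i - a) + c + INR k * beta - beta.
  rewrite INR_L /c /t Ii1 !(minus_IZR _ a) mult_IZR.
  set I := IZR (Z.of_nat i).
  transitivity (I - IZR a + (1 - beta) * (1 - ((I + 1) * beta - IZR a)) +
    INR k * beta - beta + (I + 1) * (3 * beta - 1 - beta * beta)); first ring.
  by rewrite bsq; ring.
have [c0 c1] : 0 < c < 1 - beta.
  by rewrite /c; split; [apply: Rmult_lt_0_compat|]; nra.
split.
- by apply: Int_part_eq; rewrite -addn1 fold /=; lra.
- by apply: Int_part_eq; rewrite -addn2 fold /=; lra.
move=> ai2; have t2 : t < 1 - beta.
  have [_] := Int_part_bounds (INR i.+2 * beta); rewrite -/(lower i.+2) ai2 /t S_INR; lra.
apply: Int_part_eq; rewrite -addn3 fold plus_IZR /=.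
have : c > 1 - 2 * beta by rewrite /c; nra.
lra.
Qed.

End SubstitutionFold.

Lemma fib_sub_prefix (i : nat) : fib_sub (mkseq fw i) = mkseq fw (sub_len i).
Proof.
elim: i => [//|i IHi].
rewrite /sub_len mkseqS !fib_sub_rcons size_cat -/(sub_len i) IHi.
have [fL0 fL1 fL2] := lower_after_image i.
have fwL : fw (sub_len i) = 0%N by rewrite /fw /sturm fL0 fL1 Z.sub_diag.
have : Z.of_nat (fw i) = (lower i.+2 - lower i.+1)%Z := sturmE i.+1.
have : (fw i <= 1)%N := sturm_le1 i.+1.
case: (fw i) => [|[|//]] _ e /=.
- have fwL1 : fw (sub_len i).+1 = 1%N.
    by rewrite /fw /sturm fL2 ?fL1; lia.
  by rewrite addn2 !mkseqS -!cats1 -catA fwL fwL1.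
- by rewrite addn1 mkseqS -cats1 fwL.
Qed.

Lemma iter_fib_sub_prefix (K : nat) :
  exists2 n, K < n & iter K fib_sub [:: 0] = mkseq fw n.
Proof.
elim: K => [|K [n Kn IHK]].
  by exists 1 => //; rewrite /mkseq /= /fw /sturm !lower_small.
exists (sub_len n); last by rewrite iterS IHK fib_sub_prefix.
suff : (Z.of_nat n < Z.of_nat (sub_len n))%Z by lia.
by rewrite sub_lenE; have := lower_lt_self (leq_ltn_trans (leq0n K) Kn); lia.
Qed.

Lemma fib_wordE (n : nat) : fib_word n = fw n.
Proof.
rewrite /fib_word; have [m nm ->] := iter_fib_sub_prefix n.+1.
by rewrite nth_mkseq //; apply: ltn_trans nm.
Qed.

Lemma g_wordE (n : nat) : g_word n = sturm n.
Proof.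
case: n => [|n]; last exact: fib_wordE.
by rewrite /sturm !lower_small.
Qed.

Lemma pigeonhole (M : nat) (f : nat -> nat) : (forall j, j <= M -> f j < M) ->
  exists i j, [/\ i < j, j <= M & f i = f j].
Proof.
move=> fM; pose g (k : 'I_M.+1) : 'I_M := Ordinal (fM k (ltn_ord k)).
have /injectivePn [a [b ab /(congr1 val) /= fab]] : ~~ injectiveb g.
  by apply/injectiveP => /leq_card; rewrite !card_ord ltnn.
have [lt_ab|lt_ba|/val_inj eq_ab] := ltngtP a b; last by rewrite eq_ab eqxx in ab.
  by exists a, b; split=> //; rewrite -ltnS.
by exists b, a; split=> //; rewrite -ltnS.
Qed.

Section Bohr.
Local Open Scope R_scope.

Definition bohr (th eta : R) (n : nat) : Prop :=
  exists N : Z, Rabs (INR n * th - IZR N) < eta.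

(* Among any sequence of reals, two terms differ by less than eta modulo 1:
   split [0, 1) into M < 1/eta pieces and use the pigeonhole principle on the
   fractional parts. *)
Lemma close_mod_one (eta : R) (y : nat -> R) : 0 < eta ->
  exists i j, (i < j)%N /\ exists N : Z, Rabs (y j - y i - IZR N) < eta.
Proof.
move=> eta0; have [M [Meta M0]] := archimed_cor1 eta eta0.
have MR : 0 < INR M := lt_0_INR M M0.
pose piece j := Int_part (frac_part (y j) * INR M).
have piece_bounds j : (0 <= piece j < Z.of_nat M)%Z.
  have [f0 f1] := base_fp (y j).
  have [lo hi] := Int_part_bounds (frac_part (y j) * INR M).
  rewrite -/(piece j) in lo hi; suff : (-1 < piece j /\ piece j < Z.of_nat M)%Z by lia.
  by split; apply: lt_IZR; rewrite -?INR_IZR_INZ; nra.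
have [i [j [ij _ eq_ij]]] : exists i j, [/\ (i < j)%N, (j <= M)%N &
    Z.to_nat (piece i) = Z.to_nat (piece j)].
  by apply: pigeonhole => j _; have := piece_bounds j; lia.
exists i, j; split=> //; exists (Int_part (y j) - Int_part (y i))%Z.
have piece_eq : piece i = piece j.
  by have := piece_bounds i; have := piece_bounds j; lia.
have [lo_i hi_i] := Int_part_bounds (frac_part (y i) * INR M).
have [lo_j hi_j] := Int_part_bounds (frac_part (y j) * INR M).
rewrite -/(piece i) -/(piece j) piece_eq in lo_i hi_i lo_j hi_j.
have Mdiff : Rabs ((frac_part (y j) - frac_part (y i)) * INR M) < 1.
  by apply: Rabs_def1; lra.
rewrite Rabs_mult (Rabs_pos_eq (INR M)) in Mdiff; last exact: pos_INR.
have Minv : / INR M * INR M = 1 by field; lra.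
rewrite minus_IZR /frac_part in Mdiff *.
suff : Rabs (y j - IZR (Int_part (y j)) - (y i - IZR (Int_part (y i)))) < / INR M.
  by move=> h; apply: Rlt_trans Meta; apply: Rle_lt_trans h; right; congr Rabs; ring.
by apply: (Rmult_lt_reg_r (INR M)) => //; rewrite Minv.
Qed.

(* Bohr neighbourhoods of 0 are IP*-sets: for x_0 < x_1 < ..., two partial
   sums S_i < S_j have S_j th - S_i th close to an integer, and S_j - S_i is
   a finite sum of the x's. *)
Lemma bohr_IPstar (th eta : R) : 0 < eta -> IPstar (bohr th eta).
Proof.
move=> eta0 B [x [_ Bx]].
pose S j := (\sum_(i <- iota 0 j) x i)%N.
have [i [j [ij [N close]]]] := close_mod_one (fun j => INR (S j) * th) eta0.
pose D := (\sum_(l <- iota i (j - i)) x l)%N.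
have SD : S j = (S i + D)%N.
  by rewrite /S /D -big_cat -iotaD subnKC // ltnW.
exists D; split; last first.
  by apply: Bx; rewrite ?iota_uniq // -size_eq0 size_iota subn_eq0 -ltnNge.
by exists N; move: close; rewrite SD INR_addn; congr (Rabs _ < _); ring.
Qed.

End Bohr.

Section OneSidedBohr.
Local Open Scope R_scope.

Definition irrational (th : R) : Prop :=
  forall (m : nat) (N : Z), (0 < m)%N -> INR m * th <> IZR N.

Definition bohr_right (th eta : R) (n : nat) : Prop :=
  (0 < n)%N /\ exists N : Z, 0 <= INR n * th - IZR N < eta.

Lemma bohr_right_mono (th e e' : R) (n : nat) :
  e <= e' -> bohr_right th e n -> bohr_right th e' n.
Proof. by move=> ee' [n0 [N nN]]; split=> //; exists N; lra. Qed.

Lemma bohr_right_add (th eta : R) (m n : nat) :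
  bohr_right th (eta / 2) m -> bohr_right th (eta / 2) n -> bohr_right th eta (m + n).
Proof.
move=> [m0 [M mM]] [n0 [N nN]]; split; first by rewrite addn_gt0 m0.
by exists (M + N)%Z; rewrite INR_addn plus_IZR; lra.
Qed.

(* Dirichlet: some positive multiple of th is eta-close to an integer
   (the positive integers form an IP-set). *)
Lemma dirichlet (th eta : R) : 0 < eta -> exists2 m, (0 < m)%N & bohr th eta m.
Proof.
move=> eta0; have IPpos : IPset (fun n => (0 < n)%N).
  by exists S; split=> // [[|i F]] // _ _; rewrite big_cons addSn.
by have [m []] := bohr_IPstar th eta0 IPpos; exists m.
Qed.

(* For irrational th, some positive multiple of th lies strictly above an
   integer by less than eta: if m th = N - g with 0 < g < eta, take the
   multiple k m with k = floor(1/g), for which k m th = k N - 1 + (1 - k g). *)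
Lemma approx_from_above (th eta : R) : irrational th -> 0 < eta <= 1/2 ->
  exists2 m, (0 < m)%N & exists N : Z, 0 < INR m * th - IZR N < eta.
Proof.
move=> irr [eta0 eta1]; have [m m0 [N mN]] := dirichlet th eta0.
have nz : INR m * th - IZR N <> 0 by move=> h; apply: (irr m N m0); lra.
have [pos|neg] := Rlt_le_dec 0 (INR m * th - IZR N).
  by exists m => //; exists N; move: mN; rewrite Rabs_right; lra.
set g := IZR N - INR m * th.
have [g0 geta] : 0 < g < eta by move: mN; rewrite Rabs_left1 /g; lra.
have [klo khi] := Int_part_bounds (/ g); set k := Int_part (/ g) in klo khi *.
have k1 : (1 <= k)%Z.
  apply: le_IZR; suff : 2 <= / g by lra.
  by rewrite -(Rinv_inv 2); apply: Rinv_le_contravar; lra.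
have kR : INR (Z.to_nat k) = IZR k by rewrite INR_IZR_INZ Z2Nat.id //; lia.
have km0 : (0 < Z.to_nat k * m)%N by rewrite muln_gt0 m0; lia.
exists (Z.to_nat k * m)%N => //; exists (k * N - 1)%Z.
have -> : INR (Z.to_nat k * m) * th - IZR (k * N - 1) = 1 - IZR k * g.
  by rewrite -multE mult_INR kR minus_IZR mult_IZR /g; ring.
have gi : / g * g = 1 by field; lra.
have kg : IZR k * g <= 1 by rewrite -gi; apply: Rmult_le_compat_r; lra.
have k1g : 1 < (IZR k + 1) * g by rewrite -gi; apply: Rmult_lt_compat_r; lra.
split; last lra.
case: (Rle_lt_or_eq_dec _ _ kg) => [|kg1]; first lra.
exfalso; apply: (irr _ (k * N - 1)%Z km0).
by rewrite -multE mult_INR kR minus_IZR mult_IZR; move: kg1; rewrite /g; lra.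
Qed.

(* One-sided Bohr sets of an irrational th are syndetic: with
   0 < m th - N0 = g < eta, from any n some n + j m, j <= floor(1/g) + 1,
   has fractional part of (n + j m) th in [0, eta). *)
Lemma bohr_right_syndetic (th eta : R) : irrational th -> 0 < eta <= 1/2 ->
  syndetic (bohr_right th eta).
Proof.
move=> irr etab; have [m m0 [N0 [g0 geta]]] := approx_from_above irr etab.
set g := INR m * th - IZR N0 in g0 geta.
exists ((Z.to_nat (Int_part (/ g)) + 1) * m)%N => n.
have [Flo Fhi] := Int_part_bounds (INR n * th); set F := Int_part _ in Flo Fhi.
set x := INR n * th - IZR F.
have [klo khi] := Int_part_bounds ((1 - x) / g); set k := Int_part _ in klo khi.
have [Klo Khi] := Int_part_bounds (/ g); set K := Int_part (/ g) in Klo Khi *.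
have [x0 x1] : 0 <= x < 1 by rewrite /x; lra.
have xg : (1 - x) / g * g = 1 - x by field; lra.
have ginv := Rinv_0_lt_compat g g0.
have [xg_pos xg_le] : 0 <= (1 - x) / g <= / g by rewrite /Rdiv; split; nra.
have [k0 kK] : (0 <= k /\ k <= K)%Z.
  by split; [suff : (0 < k + 1)%Z by lia|suff : (k < K + 1)%Z by lia];
    apply: lt_IZR; rewrite plus_IZR; lra.
clearbody F k K.
have kR : INR (Z.to_nat k + 1) = IZR k + 1.
  by rewrite INR_addn INR_IZR_INZ Z2Nat.id.
exists ((Z.to_nat k + 1) * m)%N; first by apply: leq_mul => //; lia.
split; first by rewrite addn_gt0 muln_gt0 m0 addn1 orbT.
exists (F + (k + 1) * N0 + 1)%Z.
have -> : INR (n + (Z.to_nat k + 1) * m) * th - IZR (F + (k + 1) * N0 + 1) =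
    x + (IZR k + 1) * g - 1.
  by rewrite INR_addn -multE mult_INR kR !plus_IZR mult_IZR plus_IZR /x /g; ring.
by split; nra.
Qed.

End OneSidedBohr.

Lemma central_mono (A B : set nat) : A `<=` B -> central A -> central B.
Proof.
move=> AB [p [pmin pA]]; exists p; split=> //.
by case: pmin => Up _ _ _; apply: (ufS Up AB pA).
Qed.

Section BohrCentral.
Local Open Scope R_scope.

(* One-sided Bohr sets of irrationals are central: the sets
   bohr_right th (eta / 2^t) satisfy the hypotheses of
   [minimal_idempotent_family]. *)
Lemma bohr_right_central (th eta : R) : irrational th -> 0 < eta <= 1/2 ->
  central (bohr_right th eta).
Proof.
move=> irr [eta0 eta1]; pose D t := bohr_right th (eta / 2 ^ t).
have pow_pos t : 0 < 2 ^ t by apply: pow_lt; lra.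
have pow_ge1 t : 1 <= 2 ^ t by apply: pow_R1_Rle; lra.
have half t : eta / 2 ^ t.+1 = eta / 2 ^ t / 2.
  by rewrite /=; field; apply: Rgt_not_eq.
have [p [p_min pD]] : exists p, minimal_idempotent p /\ forall t, p (D t).
  apply: minimal_idempotent_family => [t n|t m n|t|[]//].
  - apply: bohr_right_mono; rewrite half.
    suff : 0 < eta / 2 ^ t by lra.
    exact: Rdiv_lt_0_compat.
  - by rewrite /D half; apply: bohr_right_add.
  - apply: bohr_right_syndetic => //; split; first exact: Rdiv_lt_0_compat.
    apply: Rle_trans eta1; rewrite -[X in _ <= X]Rdiv_1_r; have := pow_ge1 t.
    by move=> t1; apply: Rmult_le_compat_l; [lra|apply: Rinv_le_contravar; lra].
by exists p; split=> //; move: (pD 0%N); rewrite /D /= Rdiv_1_r.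
Qed.

End BohrCentral.

Section Occurrences.
Local Open Scope R_scope.

Lemma beta_irr : irrational beta.
Proof.
move=> m N m0; rewrite INR_IZR_INZ; apply: beta_irrational; lia.
Qed.

Lemma neg_beta_irr : irrational (- beta).
Proof.
move=> m N m0 mN; apply: (beta_irr (N := (- N)%Z) m0).
by rewrite opp_IZR -mN; ring.
Qed.

Lemma frac_margin (K : nat) : exists eps, (0 < eps <= 1/2) /\
  forall j, (0 < j <= K)%N -> eps <= INR j * beta - IZR (lower j) <= 1 - eps.
Proof.
elim: K => [|K [eps [[e0 e1] margin]]].
  by exists (1/2); split=> [|j]; [lra|lia].
have f0 := lower_lt (ltn0Sn K); have [_ f1] := Int_part_bounds (INR K.+1 * beta).
rewrite -/(lower K.+1) in f1; set f := INR K.+1 * beta - IZR (lower K.+1).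
have [fpos flt1] : 0 < f < 1 by rewrite /f; lra.
exists (Rmin eps (Rmin f (1 - f))); split.
  by split; [repeat apply: Rmin_pos|apply: Rle_trans (Rmin_l _ _) _]; lra.
move=> j /andP [j0]; rewrite leq_eqVlt => /predU1P [->|jK].
  rewrite -/f; have := Rmin_r eps (Rmin f (1 - f)).
  by have := Rmin_l f (1 - f); have := Rmin_r f (1 - f); lra.
have := margin j; rewrite j0 -ltnS jK => /(_ isT).
by have := Rmin_l eps (Rmin f (1 - f)); lra.
Qed.

Variables (k : nat) (eps : R).
Hypotheses (eps_pos : 0 < eps) (eps_half : eps <= 1/2).
Hypothesis margin : forall j, (0 < j <= k.+1)%N ->
  eps <= INR j * beta - IZR (lower j) <= 1 - eps.

Lemma lower_shift (n j : nat) (N : Z) (d : R) :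
  INR n * beta = IZR N + d -> - eps < d < eps -> (0 < j <= k.+1)%N ->
  lower (n + j) = (N + lower j)%Z.
Proof.
move=> nN d_eps jk; have := margin jk; rewrite /lower INR_addn Rmult_plus_distr_r nN.
by move=> mj; apply: Int_part_eq; rewrite plus_IZR; lra.
Qed.

Lemma sturm_shift (n j : nat) (N : Z) (d : R) :
  INR n * beta = IZR N + d -> - eps < d < eps -> (0 < j <= k)%N ->
  sturm (n + j) = sturm j.
Proof.
move=> nN d_eps /andP [j0 jk]; rewrite /sturm -addnS.
by rewrite !(lower_shift nN d_eps); lia.
Qed.

Let u := word_prefix fib_word k.

Lemma nth_prefix (i : nat) : (i < k)%N -> nth 0%N u i = sturm i.+1.
Proof. by move=> ik; rewrite /u /word_prefix nth_mkseq // fib_wordE. Qed.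

Lemma bohr_occ (n : nat) : bohr beta eps n -> occ fib_word u n.
Proof.
move=> [N nN] i; rewrite size_mkseq => ik.
rewrite nth_prefix // fib_wordE /fw -addnS.
have nd : INR n * beta = IZR N + (INR n * beta - IZR N) by ring.
by apply: (sturm_shift nd); [move/Rabs_def2: nN; lra|rewrite ltn0Sn].
Qed.

Lemma bohr_right_occ0 (n : nat) :
  bohr_right beta eps n -> occ g_word (0%N :: u) n.
Proof.
move=> [n0 [N nN]].
have nd : INR n * beta = IZR N + (INR n * beta - IZR N) by ring.
case=> [_|i]; rewrite /= g_wordE.
  rewrite addn0 /sturm -addn1 (lower_shift nd) //; last lra.
  have -> : lower n = N by apply: Int_part_eq; lra.
  by rewrite lower_small //; lia.
rewrite ltnS size_mkseq => ik; rewrite nth_prefix // (sturm_shift nd) //; lra.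
Qed.

Lemma bohr_right_occ1 (n : nat) :
  bohr_right (- beta) eps n -> occ g_word (1%N :: u) n.
Proof.
move=> [n0 [N nN]]; have nz : INR n * - beta - IZR N <> 0.
  by move=> h; apply: (neg_beta_irr (N := N) n0); lra.
have nd : INR n * beta = IZR (- N) + (IZR N - INR n * - beta).
  by rewrite opp_IZR; ring.
case=> [_|i]; rewrite /= g_wordE.
  rewrite addn0 /sturm -addn1 (lower_shift nd) //; last lra.
  have -> : lower n = (- N - 1)%Z.
    by apply: Int_part_eq; rewrite minus_IZR opp_IZR; lra.
  by rewrite lower_small //; lia.
rewrite ltnS size_mkseq => ik; rewrite nth_prefix // (sturm_shift nd) //; lra.
Qed.

End Occurrences.

Theorem mainTheorem9 :
  forall k : nat, 0 < k ->
    let u := word_prefix fib_word k in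
    [/\ IPstar (occ fib_word u) /\ central_star (occ fib_word u),
        IPset (occ g_word (0 :: u)) /\ central (occ g_word (0 :: u)) &
        IPset (occ g_word (1 :: u)) /\ central (occ g_word (1 :: u))].
Proof.
move=> k _ u.
have [eps [[eps_pos eps_half] margin]] := frac_margin k.+1.
have IPs : IPstar (occ fib_word u).
  move=> B /(bohr_IPstar beta eps_pos) [n [bn Bn]].
  by exists n; split=> //; apply: (bohr_occ margin).
have C0 : central (occ g_word (0 :: u)).
  apply: central_mono (bohr_right_central beta_irr (conj eps_pos eps_half)).
  exact: bohr_right_occ0 eps_pos eps_half margin.
have C1 : central (occ g_word (1 :: u)).
  apply: central_mono (bohr_right_central neg_beta_irr (conj eps_pos eps_half)).
  exact: bohr_right_occ1 eps_pos eps_half margin.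
split; split=> //; first exact: IPstar_central_star.
  exact: central_IPset.
exact: central_IPset.
Qed.
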